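(* Let $X,Z\in\mathbb{R}^{n\times r}$ with $XX^{T}\ne ZZ^{T}$. Let $Z_{\perp}=(I-XX^{\dagger})Z$ and define $$\alpha=\frac{\|Z_{\perp}Z_{\perp}^{T}\|_{F}}{\|XX^{T}-ZZ^{T}\|_{F}},\qquad\beta=\frac{\sigma_{\min}^{2}(X)}{\|XX^{T}-ZZ^{T}\|_{F}}\cdot\frac{\mathrm{tr}(Z_{\perp}Z_{\perp}^{T})}{\|Z_{\perp}Z_{\perp}^{T}\|_{F}},$$ and $$\delta_{\mathrm{lb}}(X,Z)=\gamma(\alpha,\beta):=\begin{cases}\sqrt{1-\alpha^{2}} & \text{if }\beta\ge\frac{\alpha}{1+\sqrt{1-\alpha^{2}}},\\ \frac{1-2\alpha\beta+\beta^{2}}{1-\beta^{2}} & \text{if }\beta<\frac{\alpha}{1+\sqrt{1-\alpha^{2}}}.\end{cases}$$ Then $\delta(X,Z)\ge\delta_{\mathrm{lb}}(X,Z)$.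
   Context: $A^{\dagger}$ denotes the Moore–Penrose pseudoinverse, $\sigma_{\min}(X)$ the smallest (i.e. $r$-th) singular value of $X\in\mathbb{R}^{n\times r}$. When $Z_{\perp}=0$ (so $\alpha=0$ and $\gamma=1$ regardless), $\beta$ may be taken as $\sigma_{\min}^{2}(X)/\|XX^{T}-ZZ^{T}\|_{F}$. A linear map $\mathcal{A}:\mathbb{R}^{n\times n}\to\mathbb{R}^{m}$ satisfies $(\delta,p)$-RIP if $0\le\delta<1$ and there is $\nu>0$ with $(1-\delta)\|E\|_{F}^{2}\le\frac{1}{\nu}\|\mathcal{A}(E)\|^{2}\le(1+\delta)\|E\|_{F}^{2}$ for all $E\in\mathbb{R}^{n\times n}$ of rank at most $p$. With $r^{\star}=\mathrm{rank}(Z)$, $\delta(X,Z)$ is the infimum of all $\delta$ for which there exist $m\ge1$ and a linear $\mathcal{A}:\mathbb{R}^{n\times n}\to\mathbb{R}^{m}$ satisfying $(\delta,r+r^{\star})$-RIP such that $f_{\mathcal{A}}(U)=\|\mathcal{A}(UU^{T}-ZZ^{T})\|^{2}$ (on $\mathbb{R}^{n\times r}$) satisfies $\nabla f_{\mathcal{A}}(X)=0$ and $\nabla^{2}f_{\mathcal{A}}(X)\succeq0$. *)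

From HB Require Import structures.
From mathcomp Require Import all_boot all_order all_algebra.
From mathcomp Require Import all_classical all_reals all_analysis.
Set Implicit Arguments. Unset Strict Implicit. Unset Printing Implicit Defensive.
Import Order.TTheory GRing.Theory Num.Theory.
Local Open Scope ring_scope.
Local Open Scope classical_set_scope.

Section Defs.
Variable R : realType.

Definition frob (m p : nat) (A : 'M[R]_(m, p)) : R :=
  Num.sqrt (\sum_(i < m) \sum_(j < p) A i j ^+ 2).

Definition sqnorm (m : nat) (v : 'rV[R]_m) : R := \sum_(i < m) v 0 i ^+ 2.

Definition is_pinv (m p : nat) (A : 'M[R]_(m, p)) (B : 'M[R]_(p, m)) : Prop :=
  [/\ A *m B *m A = A, B *m A *m B = B,
      (A *m B)^T = A *m B & (B *m A)^T = B *m A].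

(* sigma_min(X)^2 = smallest eigenvalue of X^T X (= square of the r-th
   singular value of X in R^{n x r}) *)
Definition sigma_min_sq (n r : nat) (X : 'M[R]_(n, r)) : R :=
  inf [set a : R | eigenvalue (X^T *m X) a].

Definition RIP (n m : nat) (A : 'M[R]_n -> 'rV[R]_m) (delta : R) (p : nat) : Prop :=
  0 <= delta < 1 /\
  exists nu : R, 0 < nu /\
    forall E : 'M[R]_n, (\rank E <= p)%N ->
      (1 - delta) * frob E ^+ 2 <= sqnorm (A E) / nu /\
      sqnorm (A E) / nu <= (1 + delta) * frob E ^+ 2.

Definition fA (n r m : nat) (A : 'M[R]_n -> 'rV[R]_m) (Z : 'M[R]_(n, r))
  (U : 'M[R]_(n, r)) : R := sqnorm (A (U *m U^T - Z *m Z^T)).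

Definition grad_zero (n r : nat) (f : 'M[R]_(n, r) -> R) (X : 'M[R]_(n, r)) : Prop :=
  forall D : 'M[R]_(n, r), derive1 (fun t : R => f (X + t *: D)) 0 = 0.

Definition hess_psd (n r : nat) (f : 'M[R]_(n, r) -> R) (X : 'M[R]_(n, r)) : Prop :=
  forall D : 'M[R]_(n, r), 0 <= derive1n 2 (fun t : R => f (X + t *: D)) 0.

Definition delta_set (n r : nat) (X Z : 'M[R]_(n, r)) : set R :=
  [set d : R | exists (m : nat) (A : {linear 'M[R]_n -> 'rV[R]_m}),
     (1 <= m)%N /\ RIP A d (r + \rank Z) /\
     grad_zero (fA A Z) X /\ hess_psd (fA A Z) X].

(* delta(X,Z) as an extended real: inf of the empty set is +oo *)
Definition delta_XZ (n r : nat) (X Z : 'M[R]_(n, r)) : \bar R :=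
  ereal_inf [set (d%:E) | d in delta_set X Z].

Definition gamma_fn (alpha beta : R) : R :=
  if alpha / (1 + Num.sqrt (1 - alpha ^+ 2)) <= beta
  then Num.sqrt (1 - alpha ^+ 2)
  else (1 - 2 * alpha * beta + beta ^+ 2) / (1 - beta ^+ 2).

Definition Zperp (n r : nat) (X : 'M[R]_(n, r)) (Xp : 'M[R]_(r, n))
  (Z : 'M[R]_(n, r)) : 'M[R]_(n, r) := (1%:M - X *m Xp) *m Z.

Definition alpha_of (n r : nat) (X : 'M[R]_(n, r)) (Xp : 'M[R]_(r, n))
  (Z : 'M[R]_(n, r)) : R :=
  let Zp := Zperp X Xp Z in
  frob (Zp *m Zp^T) / frob (X *m X^T - Z *m Z^T).

(* when Z_perp = 0, beta is taken as sigma_min^2(X)/||XX^T - ZZ^T||_F *)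
Definition beta_of (n r : nat) (X : 'M[R]_(n, r)) (Xp : 'M[R]_(r, n))
  (Z : 'M[R]_(n, r)) : R :=
  let Zp := Zperp X Xp Z in
  if Zp == 0 then sigma_min_sq X / frob (X *m X^T - Z *m Z^T)
  else sigma_min_sq X / frob (X *m X^T - Z *m Z^T) *
       (\tr (Zp *m Zp^T) / frob (Zp *m Zp^T)).

Definition delta_lb (n r : nat) (X : 'M[R]_(n, r)) (Xp : 'M[R]_(r, n))
  (Z : 'M[R]_(n, r)) : R :=
  gamma_fn (alpha_of X Xp Z) (beta_of X Xp Z).

End Defs.

From HB Require Import structures.
From mathcomp Require Import all_boot all_order all_algebra.
From mathcomp Require Import all_classical all_reals all_analysis.
From mathcomp Require Import ring lra.
Set Implicit Arguments. Unset Strict Implicit. Unset Printing Implicit Defensive.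
Import Order.TTheory GRing.Theory Num.Theory.
From mathcomp Require Import complex.
Local Open Scope ring_scope.

(* Write e = XX^T - ZZ^T and M = Z_perp Z_perp^T.  Then <e, M> = -|M|^2 and
   e + M = X D^T + D X^T for some D, so at a second-order critical point the
   gradient condition gives <Ae, Ae> + <Ae, AM> = 0, while the Hessian tested
   in the directions b v (b a column of Z_perp, v an eigenvector of X^T X)
   gives <Ae, AM> >= -nu (1 + delta) sigma_min^2(X) tr M.  The RIP on the plane
   spanned by e and M is a two-sided bound on a 2x2 Gram form; eliminating
   its unknown entries from these two constraints leaves
   gamma(alpha, beta) <= delta. *)

Section FrobeniusInnerProduct.
Variable R : realDomainType.
Variables m p : nat.
Implicit Types A B C : 'M[R]_(m, p).

Definition mxdot A B : R := \sum_i \sum_j A i j * B i j.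

Lemma mxdotC A B : mxdot A B = mxdot B A.
Proof. by apply: eq_bigr => i _; apply: eq_bigr => j _; rewrite mulrC. Qed.

Lemma mxdotDl A B C : mxdot (A + B) C = mxdot A C + mxdot B C.
Proof.
rewrite /mxdot -big_split; apply: eq_bigr => i _.
by rewrite -big_split; apply: eq_bigr => j _; rewrite mxE mulrDl.
Qed.

Lemma mxdotZl a A B : mxdot (a *: A) B = a * mxdot A B.
Proof.
rewrite /mxdot mulr_sumr; apply: eq_bigr => i _.
by rewrite mulr_sumr; apply: eq_bigr => j _; rewrite mxE mulrA.
Qed.

Lemma mxdotNl A B : mxdot (- A) B = - mxdot A B.
Proof. by rewrite -scaleN1r mxdotZl mulN1r. Qed.

Lemma mxdotDr A B C : mxdot A (B + C) = mxdot A B + mxdot A C.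
Proof. by rewrite mxdotC mxdotDl !(mxdotC A). Qed.

Lemma mxdotZr a A B : mxdot A (a *: B) = a * mxdot A B.
Proof. by rewrite mxdotC mxdotZl mxdotC. Qed.

Lemma mxdot0r A : mxdot A 0 = 0.
Proof. by rewrite -(scale0r 0) mxdotZr mul0r. Qed.

Lemma mxdot_sumr (I : finType) A (F : I -> 'M[R]_(m, p)) :
  mxdot A (\sum_k F k) = \sum_k mxdot A (F k).
Proof. exact: (big_morph _ (mxdotDr A) (mxdot0r A)). Qed.

Lemma mxdot_trace A B : mxdot A B = \tr (A *m B^T).
Proof.
apply: eq_bigr => i _; rewrite mxE.
by apply: eq_bigr => j _; rewrite mxE.
Qed.

Lemma mxdot_ge0 A : 0 <= mxdot A A.
Proof. by do 2!apply: sumr_ge0 => ? _; rewrite -expr2 sqr_ge0. Qed.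

Lemma mxdot_gt0 A : A != 0 -> 0 < mxdot A A.
Proof.
move=> A_neq0; rewrite lt_def mxdot_ge0 andbT; apply: contra A_neq0 => /eqP dot0.
have sq_ge0 (i : 'I_m) (j : 'I_p) : 0 <= A i j * A i j by rewrite -expr2 sqr_ge0.
apply/eqP/matrixP => i j; rewrite mxE.
have row0 := psumr_eq0P (fun k _ => sumr_ge0 _ (fun l _ => sq_ge0 k l))
  dot0 (i := i) isT.
have /eqP := psumr_eq0P (fun l _ => sq_ge0 i l) row0 (i := j) isT.
by rewrite mulf_eq0 orbb => /eqP.
Qed.

Lemma mxdot_expand2 x y A B :
  mxdot (x *: A + y *: B) (x *: A + y *: B)
    = x ^+ 2 * mxdot A A + 2 * x * y * mxdot A B + y ^+ 2 * mxdot B B.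
Proof. by rewrite !(mxdotDl, mxdotDr, mxdotZl, mxdotZr) (mxdotC B A); ring. Qed.

Lemma mxdot_expand3 t A B C :
  mxdot (A + t *: B + t ^+ 2 *: C) (A + t *: B + t ^+ 2 *: C)
    = mxdot A A + 2 * mxdot A B * t + (mxdot B B + 2 * mxdot A C) * t ^+ 2
      + 2 * mxdot B C * t ^+ 3 + mxdot C C * t ^+ 4.
Proof.
by rewrite !(mxdotDl, mxdotDr, mxdotZl, mxdotZr) (mxdotC B A) (mxdotC C A)
  (mxdotC C B); ring.
Qed.

End FrobeniusInnerProduct.

Lemma mxdot_col_sum (R : realDomainType) (m p : nat) (A B : 'M[R]_(m, p)) :
  \sum_k mxdot (col k A) (col k B) = mxdot A B.
Proof.
rewrite /mxdot [RHS]exchange_big; apply: eq_bigr => k _.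
by apply: eq_bigr => i _; rewrite big_ord1 !mxE.
Qed.

Lemma mul_row_trmx (R : realDomainType) (n : nat) (u w : 'rV[R]_n) :
  u *m w^T = (mxdot u w)%:M.
Proof. by rewrite [LHS]mx11_scalar -trace_mx11 -mxdot_trace. Qed.

Lemma mul_trmx_col (R : realDomainType) (n : nat) (u w : 'cV[R]_n) :
  u^T *m w = (mxdot u w)%:M.
Proof.
by rewrite [LHS]mx11_scalar -trace_mx11 mxtrace_mulC -mxdot_trace mxdotC.
Qed.

Lemma mxdot_sym_outer (R : realDomainType) (n : nat) (u w : 'cV[R]_n) :
  let S := u *m w^T + w *m u^T in
  mxdot S S = 2 * mxdot u u * mxdot w w + 2 * mxdot u w ^+ 2.
Proof.
have outer (a b c e : 'cV[R]_n) :
    \tr (a *m b^T *m (c *m e^T)) = mxdot b c * mxdot a e.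
  by rewrite mulmxA -(mulmxA a) mul_trmx_col mul_mx_scalar -scalemxAl
    mxtraceZ -mxdot_trace.
rewrite /= mxdot_trace !linearD /= !trmx_mul !trmxK.
rewrite !(mulmxDl, mulmxDr) !mxtraceD !outer (mxdotC w u); ring.
Qed.

Lemma sqr_frob (R : realType) (m p : nat) (A : 'M[R]_(m, p)) :
  frob A ^+ 2 = mxdot A A.
Proof.
rewrite sqr_sqrtr; last by do 2!apply: sumr_ge0 => ? _; rewrite sqr_ge0.
by apply: eq_bigr => i _; apply: eq_bigr => j _; rewrite expr2.
Qed.

Lemma sqnorm_mxdot (R : realType) (m : nat) (v : 'rV[R]_m) :
  sqnorm v = mxdot v v.
Proof. by rewrite /mxdot big_ord1; apply: eq_bigr => j _; rewrite expr2. Qed.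

Lemma sum_col_mul_trmx (R : pzSemiRingType) (m p : nat) (A : 'M[R]_(m, p)) :
  \sum_k col k A *m (col k A)^T = A *m A^T.
Proof.
apply/matrixP => i j; rewrite summxE mxE; apply: eq_bigr => k _.
by rewrite mxE big_ord1 !mxE.
Qed.

Lemma frob_gt0 (R : realType) (m p : nat) (A : 'M[R]_(m, p)) :
  A != 0 -> 0 < frob A.
Proof.
move=> /mxdot_gt0; rewrite -sqr_frob => sq_gt0.
have f_ge0 : 0 <= frob A by apply: sqrtr_ge0.
by rewrite lt0r f_ge0 andbT; apply: contraTneq sq_gt0 => ->; rewrite expr0n ltxx.
Qed.

Section SymmetricRealEigenvalue.
Variable R : rcfType.

Lemma Re_sum (I : finType) (F : I -> R[i]) : Re (\sum_i F i) = \sum_i Re (F i).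
Proof.
exact: (big_morph _ (raddfD (@Re R : Rcomplex R -> R))
  (raddf0 (@Re R : Rcomplex R -> R))).
Qed.

Lemma Im_sum (I : finType) (F : I -> R[i]) : Im (\sum_i F i) = \sum_i Im (F i).
Proof.
exact: (big_morph _ (raddfD (@Im R : Rcomplex R -> R))
  (raddf0 (@Im R : Rcomplex R -> R))).
Qed.

(* A complex eigenvector [u + i v] of a real symmetric matrix [S] gives
   [<u S, v> = <v S, u>], which forces the eigenvalue to be real. *)
Lemma symmetric_real_eigenvalue (r : nat) (S : 'M[R]_r.+1) :
  S^T = S -> exists a, eigenvalue S a.
Proof.
move=> S_sym.
have [a /eigenvalueP[w w_eig w_neq0]] :=
  @eigenvalue_closed _ _ (map_mx (real_complex R) S) (ltn0Sn r).
pose u := map_mx (@Re R) w; pose v := map_mx (@Im R) w.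
have u_eig : u *m S = Re a *: u - Im a *: v.
  apply/rowP => j; rewrite [RHS](_ : _ = Re ((a *: w) 0 j)); last first.
    by rewrite !mxE; move: (a) (w 0 j) => [? ?] [? ?]; simpc.
  rewrite -w_eig !mxE Re_sum; apply: eq_bigr => k _.
  by rewrite !mxE; case: (w 0 k) => ? ?; simpc.
have v_eig : v *m S = Im a *: u + Re a *: v.
  apply/rowP => j; rewrite [RHS](_ : _ = Im ((a *: w) 0 j)); last first.
    by rewrite !mxE; move: (a) (w 0 j) => [? ?] [? ?]; simpc; rewrite addrC.
  rewrite -w_eig !mxE Im_sum; apply: eq_bigr => k _.
  by rewrite !mxE; case: (w 0 k) => ? ?; simpc.
have swap : mxdot (u *m S) v = mxdot (v *m S) u.
  by rewrite !mxdot_trace -mxtrace_tr !trmx_mul trmxK S_sym mulmxA.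
have uv_neq0 : (u != 0) || (v != 0).
  apply: contraR w_neq0; rewrite negb_or !negbK => /andP[/eqP u0 /eqP v0].
  apply/eqP/rowP => j; move/rowP/(_ j): u0; move/rowP/(_ j): v0; rewrite !mxE.
  by case: (w 0 j) => x y /= -> ->.
have norm_gt0 : 0 < mxdot u u + mxdot v v.
  by case/orP: uv_neq0 => /mxdot_gt0; have := mxdot_ge0 u; have := mxdot_ge0 v;
    lra.
have Im_a0 : Im a = 0.
  move: swap; rewrite u_eig v_eig !(mxdotDl, mxdotZl, mxdotNl) (mxdotC v u).
  move=> swap.
  have /eqP : Im a * (mxdot u u + mxdot v v) = 0 by lra.
  by rewrite mulf_eq0 (gt_eqF norm_gt0) orbF => /eqP.
exists (Re a); apply/eigenvalueP; case/orP: uv_neq0 => [u_neq0|v_neq0].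
  by exists u; rewrite // u_eig Im_a0 scale0r subr0.
by exists v; rewrite // v_eig Im_a0 scale0r add0r.
Qed.

End SymmetricRealEigenvalue.

Lemma mxdot_gram_eigen (R : realDomainType) (n r : nat) (X : 'M[R]_(n, r))
    (v : 'rV[R]_r) (a : R) :
  v *m (X^T *m X) = a *: v -> mxdot (X *m v^T) (X *m v^T) = a * mxdot v v.
Proof.
move=> v_eig; rewrite mxdot_trace mxtrace_mulC trmx_mul trmxK mulmxA.
by rewrite -(mulmxA v) v_eig -scalemxAl mxtraceZ -mxdot_trace.
Qed.

Lemma gram_eigenvalue_ge0 (R : realFieldType) (n r : nat) (X : 'M[R]_(n, r))
    (a : R) :
  eigenvalue (X^T *m X) a -> 0 <= a.
Proof.
case/eigenvalueP => v /mxdot_gram_eigen v_eig /mxdot_gt0 v_gt0.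
by rewrite -(pmulr_lge0 _ v_gt0) -v_eig mxdot_ge0.
Qed.

Lemma mx_neq0_cols_gt0 (R : nmodType) (n r : nat) (A : 'M[R]_(n, r)) :
  A != 0 -> (0 < r)%N.
Proof.
rewrite lt0n; apply: contraNneq => r0.
by move: A; rewrite r0 => A; rewrite thinmx0.
Qed.

Section SigmaMin.
Variables (R : realType) (n r : nat) (X : 'M[R]_(n, r)).
Hypothesis r_gt0 : (0 < r)%N.

Lemma le_sigma_min_sq (c : R) :
  (forall a, eigenvalue (X^T *m X) a -> c <= a) -> c <= sigma_min_sq X.
Proof.
move=> lb; apply: lb_le_inf => //.
case: r X r_gt0 => // r' X' _; apply: symmetric_real_eigenvalue.
by rewrite trmx_mul trmxK.
Qed.

Lemma sigma_min_sq_ge0 : 0 <= sigma_min_sq X.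
Proof. exact/le_sigma_min_sq/gram_eigenvalue_ge0. Qed.

End SigmaMin.

Lemma mxrank_mul_add_le (F : fieldType) (n r s p : nat) (X : 'M[F]_(n, r))
    (Z : 'M[F]_(n, s)) (U : 'M[F]_(r, p)) (V : 'M[F]_(s, p)) :
  (\rank (X *m U + Z *m V)%R <= r + \rank Z)%N.
Proof.
apply: leq_trans (mxrank_add _ _) _; apply: leq_add (mxrankM_maxl _ _).
exact: leq_trans (mxrankM_maxl _ _) (rank_leq_col _).
Qed.

Lemma mxrank_sym_mul_le (F : fieldType) (n r : nat) (X Z D : 'M[F]_(n, r))
    (U V : 'M[F]_r) :
  D = X *m U + Z *m V -> (\rank (X *m D^T + D *m X^T)%R <= r + \rank Z)%N.
Proof.
move=> DE; rewrite {2}DE mulmxDl -!mulmxA addrA -mulmxDr.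
exact: mxrank_mul_add_le.
Qed.

Section OrthogonalResidual.
Variables (R : realType) (n r : nat) (X Z : 'M[R]_(n, r)) (Xp : 'M[R]_(r, n)).
Local Notation Zp := (Zperp X Xp Z).

Lemma ZperpE : Zp = Z - X *m (Xp *m Z).
Proof. by rewrite /Zperp mulmxBl mul1mx mulmxA. Qed.

Lemma add_error_Zperp_sym : exists D : 'M[R]_(n, r),
  (X *m X^T - Z *m Z^T) + Zp *m Zp^T = X *m D^T + D *m X^T.
Proof.
have ZE : Z = X *m (Xp *m Z) + Zp by rewrite ZperpE addrC subrK.
move: (Xp *m Z) ZE => G ZE; rewrite [in Z *m _]ZE.
exists (2^-1 *: X - 2^-1 *: (X *m G *m G^T) - Zp *m G^T).
rewrite !linearD !linearN !linearZ /= !trmx_mul !trmxK.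
rewrite ?(mulmxDl, mulmxDr, mulmxBl, mulmxBr, mulNmx, mulmxN).
rewrite -?(scalemxAl, scalemxAr) ?mulmxA.
rewrite ?(mulmxDl, mulmxDr, mulmxBl, mulmxBr, mulNmx, mulmxN) ?mulmxA.
move: (X *m X^T) (X *m G *m G^T *m X^T) (X *m G *m Zp^T) (Zp *m G^T *m X^T)
  (Zp *m Zp^T) => a b c d e.
by apply/matrixP => i j; rewrite !mxE; field.
Qed.

Lemma mxrank_error_Zperp_le (x y : R) :
  (\rank (x *: (X *m X^T - Z *m Z^T) + y *: (Zp *m Zp^T))%R <= r + \rank Z)%N.
Proof.
suff -> : x *: (X *m X^T - Z *m Z^T) + y *: (Zp *m Zp^T)
    = X *m (x *: X^T - y *: (Xp *m Z *m Zp^T)) + Z *m (y *: Zp^T - x *: Z^T).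
  exact: mxrank_mul_add_le.
rewrite {1}ZperpE mulmxBl !mulmxBr -!scalemxAr !mulmxA.
move: (X *m X^T) (Z *m Z^T) (Z *m Zp^T) (X *m Xp *m Z *m Zp^T) => a b c d.
by apply/matrixP => i j; rewrite !mxE; ring.
Qed.

Hypothesis Xp_pinv : is_pinv X Xp.

Lemma trmx_mul_Zperp : X^T *m Zp = 0.
Proof.
case: Xp_pinv => XXpX _ XXp_sym _.
by rewrite ZperpE mulmxBr !mulmxA -(mulmxA X^T) -XXp_sym -trmx_mul XXpX subrr.
Qed.

Lemma mxdot_error_Zperp :
  mxdot (X *m X^T - Z *m Z^T) (Zp *m Zp^T) = - mxdot (Zp *m Zp^T) (Zp *m Zp^T).
Proof.
have ZtZp : Z^T *m Zp = Zp^T *m Zp.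
  by rewrite {2}ZperpE linearB /= trmx_mul mulmxBl -mulmxA trmx_mul_Zperp
    mulmx0 subr0.
(* Generalize [Zperp], whose body [trmx_mul] would otherwise unfold. *)
have XtZp := trmx_mul_Zperp.
move: Zp XtZp ZtZp => Zp XtZp ZtZp.
have eZp : (X *m X^T - Z *m Z^T) *m Zp = - (Z *m (Zp^T *m Zp)).
  by rewrite mulmxBl -!mulmxA XtZp mulmx0 sub0r ZtZp.
rewrite !mxdot_trace !trmx_mul !trmxK mulmxA eZp mulNmx linearN /=; congr (- _).
rewrite mxtrace_mulC !mulmxA -[Zp^T *m Z]trmxK trmx_mul trmxK ZtZp trmx_mul trmxK.
by rewrite [RHS]mxtrace_mulC !mulmxA.
Qed.
End OrthogonalResidual.

Lemma quartic_derive_at0 (R : realType) (f : R -> R) (k0 k1 k2 k3 k4 : R) :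
  (forall t, f t = k0 + k1 * t + k2 * t ^+ 2 + k3 * t ^+ 3 + k4 * t ^+ 4) ->
  derive1 f 0 = k1 /\ derive1n 2 f 0 = 2 * k2.
Proof.
move=> fE.
pose p : {poly R} := k0%:P + k1 *: 'X + k2 *: 'X^2 + k3 *: 'X^3 + k4 *: 'X^4.
have -> : f = horner p by apply/funext => t; rewrite fE /p !hornerE.
rewrite derive1nS derive1n1 -!derivE !horner_coef0 !coef_deriv /p !coefE /=.
by split; ring.
Qed.

Section CriticalPointConditions.
Variables (R : realType) (n r m : nat) (A : {linear 'M[R]_n -> 'rV[R]_m}).
Variables (X Z : 'M[R]_(n, r)).
Local Notation e := (X *m X^T - Z *m Z^T).

Lemma fA_along (D : 'M[R]_(n, r)) (t : R) :
  let a := A e in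
  let b := A (X *m D^T + D *m X^T) in
  let c := A (D *m D^T) in
  fA A Z (X + t *: D)
    = mxdot a a + 2 * mxdot a b * t + (mxdot b b + 2 * mxdot a c) * t ^+ 2
      + 2 * mxdot b c * t ^+ 3 + mxdot c c * t ^+ 4.
Proof.
move=> a b c; rewrite /fA.
suff -> : (X + t *: D) *m (X + t *: D)^T - Z *m Z^T
    = e + t *: (X *m D^T + D *m X^T) + t ^+ 2 *: (D *m D^T).
  by rewrite sqnorm_mxdot 2!linearD 2!linearZ mxdot_expand3.
rewrite [(X + _)^T]linearD /= [(t *: D)^T]linearZ /= mulmxDl !mulmxDr.
rewrite -!scalemxAl -!scalemxAr scalerA -expr2.
move: (X *m X^T) (X *m D^T) (D *m X^T) (D *m D^T) (Z *m Z^T) => xx xd dx dd zz.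
by apply/matrixP => i j; rewrite !mxE; ring.
Qed.

Lemma grad_zero_fA : grad_zero (fA A Z) X ->
  forall D, mxdot (A e) (A (X *m D^T + D *m X^T)) = 0.
Proof.
move=> grad0 D; have := grad0 D; have [-> _] := quartic_derive_at0 (fA_along D).
by move/eqP; rewrite mulf_eq0 pnatr_eq0 => /eqP.
Qed.

Lemma hess_psd_fA : hess_psd (fA A Z) X ->
  forall D, 0 <= mxdot (A (X *m D^T + D *m X^T)) (A (X *m D^T + D *m X^T))
                  + 2 * mxdot (A e) (A (D *m D^T)).
Proof.
move=> hess D; have := hess D; have [_ ->] := quartic_derive_at0 (fA_along D).
by rewrite pmulr_rge0.
Qed.

End CriticalPointConditions.

Section QuadraticForms.
Variable R : realFieldType.

Lemma psd_form2 (a b c : R) :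
  (forall x y : R, 0 <= a * x ^+ 2 - 2 * b * x * y + c * y ^+ 2) ->
  [/\ 0 <= a, 0 <= c & b ^+ 2 <= a * c].
Proof.
move=> psd; have := psd 1 0; have := psd 0 1.
have := psd b a; have := psd (c + 1) (2 * b).
have [->|a_neq0] := eqVneq a 0; first by split; nra.
have a_gt0 : 0 < a by have := psd 1 0; rewrite lt_def a_neq0; lra.
by split; nra.
Qed.

(* If the form [k] is bounded by [d] times the diagonal form [n], then the
   first column of [n^-1 k] has [n]-norm at most [d] times that of [e_1]. *)
Lemma form2_first_column_bound (k11 k12 k22 n1 n2 d : R) : 0 < n1 -> 0 < n2 ->
  (forall x y : R, `|k11 * x ^+ 2 + 2 * k12 * x * y + k22 * y ^+ 2|
                 <= d * (n1 * x ^+ 2 + n2 * y ^+ 2)) ->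
  k11 ^+ 2 * n2 + k12 ^+ 2 * n1 <= d ^+ 2 * n1 ^+ 2 * n2.
Proof.
move=> n1_gt0 n2_gt0 bound.
have [up1 up2 up12] : [/\ 0 <= d * n1 - k11, 0 <= d * n2 - k22 &
    k12 ^+ 2 <= (d * n1 - k11) * (d * n2 - k22)].
  by apply: psd_form2 => x y; have := bound x y; rewrite ler_norml; lra.
have [lo1 lo2 lo12] : [/\ 0 <= d * n1 + k11, 0 <= d * n2 + k22 &
    (- k12) ^+ 2 <= (d * n1 + k11) * (d * n2 + k22)].
  by apply: psd_form2 => x y; have := bound x y; rewrite ler_norml; lra.
rewrite sqrrN in lo12.
have [sgn|sgn] := lerP 0 (k22 * n1 + k11 * n2).
- have : k12 ^+ 2 * n1 <= (d * n1 - k11) * ((d * n2 - k22) * n1).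
    by rewrite mulrA ler_wpM2r // ltW.
  have : (d * n1 - k11) * ((d * n2 - k22) * n1)
           <= (d * n1 - k11) * ((d * n1 + k11) * n2).
    by rewrite ler_wpM2l //; lra.
  nra.
- have : k12 ^+ 2 * n1 <= (d * n1 + k11) * ((d * n2 + k22) * n1).
    by rewrite mulrA ler_wpM2r // ltW.
  have : (d * n1 + k11) * ((d * n2 + k22) * n1)
           <= (d * n1 + k11) * ((d * n1 - k11) * n2).
    by rewrite ler_wpM2l //; lra.
  nra.
Qed.

End QuadraticForms.

Section Gamma.
Variable R : realType.

Lemma gamma_fn_le (al be d : R) :
  0 < al <= 1 -> 0 <= be -> 0 <= d < 1 -> 1 - al ^+ 2 <= d ^+ 2 ->
  al <= (1 + d) * be \/ (al - (1 + d) * be) ^+ 2 + (1 - al ^+ 2) <= d ^+ 2 ->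
  gamma_fn al be <= d.
Proof.
move=> /andP[al_gt0 al_le1] be_ge0 /andP[d_ge0 d_lt1] s2_le cases.
set s := Num.sqrt (1 - al ^+ 2).
have s_ge0 : 0 <= s by rewrite sqrtr_ge0.
have s2 : s ^+ 2 = 1 - al ^+ 2 by rewrite sqr_sqrtr // subr_ge0 expr_le1 // ltW.
have s_le : s <= d by rewrite -(ler_pXn2r (_ : 0 < 2)%N) ?nnegrE // s2.
rewrite /gamma_fn -/s; case: ifPn => //; rewrite -ltNge.
rewrite ltr_pdivlMr; last by lra.
move=> be_small.
have be_lt1 : be < 1 by nra.
rewrite ler_pdivrMr; last by rewrite subr_gt0 expr_lt1.
case: cases => [al_le|al_close].
- have al_be : al * be <= 1 - s.
    have : be * (1 - s ^+ 2) <= al * (1 - s) by nra.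
    by rewrite s2; nra.
  have : 2 * be <= al * (1 + be ^+ 2).
    have : s ^+ 2 <= (1 - al * be) ^+ 2 by rewrite ler_sqr ?nnegrE; lra.
    by rewrite s2; nra.
  nra.
- have : (d + 1) * (d * (1 - be ^+ 2) - (1 - 2 * al * be + be ^+ 2))
           = d ^+ 2 - ((al - (1 + d) * be) ^+ 2 + (1 - al ^+ 2)) by ring.
  have : 0 <= d * (1 - be ^+ 2) - (1 - 2 * al * be + be ^+ 2) by nra.
  lra.
Qed.

(* [g] is the gain [|A e|^2 / (nu |e|^2)] of the error direction. *)
Lemma gamma_fn_le_of_gain (al be g d : R) :
  0 < al <= 1 -> 0 <= be -> 0 <= d < 1 ->
  al ^+ 2 * (g - 1) ^+ 2 + g ^+ 2 * (1 - al ^+ 2) <= al ^+ 2 * d ^+ 2 ->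
  g <= (1 + d) * al * be ->
  gamma_fn al be <= d.
Proof.
move=> /andP[al_gt0 al_le1] be_ge0 d_bnd gain gain_le.
have al2_gt0 : 0 < al ^+ 2 by rewrite exprn_gt0.
have gainE : (g - al ^+ 2) ^+ 2 + al ^+ 2 * (1 - al ^+ 2) <= al ^+ 2 * d ^+ 2.
  suff -> : (g - al ^+ 2) ^+ 2 + al ^+ 2 * (1 - al ^+ 2)
            = al ^+ 2 * (g - 1) ^+ 2 + g ^+ 2 * (1 - al ^+ 2) by [].
  ring.
apply: gamma_fn_le => //; first by rewrite al_gt0.
  by rewrite -(ler_pM2l al2_gt0); have := sqr_ge0 (g - al ^+ 2); lra.
have [al_le|al_gt] := lerP al ((1 + d) * be); [by left | right].
have : (al ^+ 2 - (1 + d) * al * be) ^+ 2 <= (al ^+ 2 - g) ^+ 2.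
  by rewrite ler_sqr ?nnegrE; nra.
move=> sq_le; rewrite -(ler_pM2l al2_gt0) mulrDr.
have -> : al ^+ 2 * (al - (1 + d) * be) ^+ 2 = (al ^+ 2 - (1 + d) * al * be) ^+ 2
  by ring.
have : (al ^+ 2 - g) ^+ 2 = (g - al ^+ 2) ^+ 2 by ring.
lra.
Qed.

End Gamma.

Section CriticalGram.
Variable R : realType.
Variables (eps mu q11 q12 q22 d : R).
Hypotheses (eps_gt0 : 0 < eps) (mu_gt0 : 0 < mu) (mu_le_eps : mu <= eps).
Hypotheses (d_ge0 : 0 <= d) (d_lt1 : d < 1).
Hypothesis q_first_order : q11 + q12 = 0.
Hypothesis q_sandwich : forall x y : R,
  (1 - d) * (x ^+ 2 * eps ^+ 2 - 2 * x * y * mu ^+ 2 + y ^+ 2 * mu ^+ 2)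
    <= x ^+ 2 * q11 + 2 * x * y * q12 + y ^+ 2 * q22 /\
  x ^+ 2 * q11 + 2 * x * y * q12 + y ^+ 2 * q22
    <= (1 + d) * (x ^+ 2 * eps ^+ 2 - 2 * x * y * mu ^+ 2 + y ^+ 2 * mu ^+ 2).

Lemma critical_gram_bound :
  mu ^+ 2 * (q11 - eps ^+ 2) ^+ 2 + q11 ^+ 2 * (eps ^+ 2 - mu ^+ 2)
    <= d ^+ 2 * eps ^+ 4 * mu ^+ 2.
Proof.
have [mu_eps|mu_neq] := eqVneq mu eps.
  rewrite mu_eps subrr mulr0 addr0.
  have [lo up] := q_sandwich 1 0; rewrite mu_eps in lo up.
  have up_dev : 0 <= d * eps ^+ 2 - (q11 - eps ^+ 2) by lra.
  have lo_dev : 0 <= d * eps ^+ 2 + (q11 - eps ^+ 2) by lra.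
  have := mulr_ge0 (mulr_ge0 up_dev lo_dev) (sqr_ge0 eps).
  suff -> : (d * eps ^+ 2 - (q11 - eps ^+ 2)) * (d * eps ^+ 2 + (q11 - eps ^+ 2))
              * eps ^+ 2
            = d ^+ 2 * eps ^+ 4 * eps ^+ 2 - eps ^+ 2 * (q11 - eps ^+ 2) ^+ 2.
    by rewrite subr_ge0.
  by ring.
have mu_lt : mu ^+ 2 < eps ^+ 2.
  by rewrite ltr_pXn2r ?nnegrE ?ltW // lt_def eq_sym mu_neq mu_le_eps.
have eps2_gt0 : 0 < eps ^+ 2 by rewrite exprn_gt0.
have n2_gt0 : 0 < eps ^+ 2 * mu ^+ 2 * (eps ^+ 2 - mu ^+ 2).
  by rewrite !mulr_gt0 ?exprn_gt0 // subr_gt0.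
(* In the coordinates [(x + y mu^2, y eps^2)] the norm form becomes diagonal. *)
have := @form2_first_column_bound _ (q11 - eps ^+ 2) (q11 * (mu ^+ 2 - eps ^+ 2))
  ((mu ^+ 2) ^+ 2 * (q11 - eps ^+ 2) + 2 * mu ^+ 2 * eps ^+ 2 * (q12 + mu ^+ 2)
     + (eps ^+ 2) ^+ 2 * (q22 - mu ^+ 2))
  (eps ^+ 2) (eps ^+ 2 * mu ^+ 2 * (eps ^+ 2 - mu ^+ 2)) d eps2_gt0 n2_gt0.
have q12E : q12 = - q11 by apply/eqP; rewrite -addr_eq0 addrC q_first_order.
have diag_bound : forall x y : R,
  `|(q11 - eps ^+ 2) * x ^+ 2 + 2 * (q11 * (mu ^+ 2 - eps ^+ 2)) * x * y +
    ((mu ^+ 2) ^+ 2 * (q11 - eps ^+ 2) + 2 * mu ^+ 2 * eps ^+ 2 * (q12 + mu ^+ 2)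
      + (eps ^+ 2) ^+ 2 * (q22 - mu ^+ 2)) * y ^+ 2|
  <= d * (eps ^+ 2 * x ^+ 2 + eps ^+ 2 * mu ^+ 2 * (eps ^+ 2 - mu ^+ 2) * y ^+ 2).
  move=> x y.
  pose Q x y := x ^+ 2 * q11 + 2 * x * y * q12 + y ^+ 2 * q22.
  pose N x y := x ^+ 2 * eps ^+ 2 - 2 * x * y * mu ^+ 2 + y ^+ 2 * mu ^+ 2.
  set x' := x + y * mu ^+ 2; set y' := y * eps ^+ 2.
  have [lo up] : (1 - d) * N x' y' <= Q x' y' /\ Q x' y' <= (1 + d) * N x' y'.
    exact: q_sandwich.
  rewrite [X in `|X|](_ : _ = Q x' y' - N x' y'); last first.
    by rewrite /Q /N /x' /y' q12E; ring.
  rewrite [X in _ <= d * X](_ : _ = N x' y'); last by rewrite /N /x' /y'; ring.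
  by rewrite ler_norml; apply/andP; split; lra.
move=> /(_ diag_bound) bound.
have k_gt0 : 0 < eps ^+ 2 * (eps ^+ 2 - mu ^+ 2) by rewrite mulr_gt0 // subr_gt0.
rewrite -(ler_pM2l k_gt0).
suff [-> ->] : eps ^+ 2 * (eps ^+ 2 - mu ^+ 2) *
    (mu ^+ 2 * (q11 - eps ^+ 2) ^+ 2 + q11 ^+ 2 * (eps ^+ 2 - mu ^+ 2))
  = (q11 - eps ^+ 2) ^+ 2 * (eps ^+ 2 * mu ^+ 2 * (eps ^+ 2 - mu ^+ 2))
    + (q11 * (mu ^+ 2 - eps ^+ 2)) ^+ 2 * eps ^+ 2 /\
  eps ^+ 2 * (eps ^+ 2 - mu ^+ 2) * (d ^+ 2 * eps ^+ 4 * mu ^+ 2)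
  = d ^+ 2 * (eps ^+ 2) ^+ 2 * (eps ^+ 2 * mu ^+ 2 * (eps ^+ 2 - mu ^+ 2)) by [].
by split; ring.
Qed.

Variable T : R.
Hypotheses (T_ge0 : 0 <= T) (q_second_order : - ((1 + d) * T) <= q12).

Lemma gamma_fn_le_of_gram : gamma_fn (mu / eps) (T / (eps * mu)) <= d.
Proof.
have eps_neq0 : eps != 0 by rewrite gt_eqF.
have mu_neq0 : mu != 0 by rewrite gt_eqF.
apply: (@gamma_fn_le_of_gain _ _ _ (q11 / eps ^+ 2)).
- by rewrite divr_gt0 //= ler_pdivrMr // mul1r.
- by rewrite divr_ge0 // mulr_ge0 // ltW.
- by rewrite d_ge0 d_lt1.
- rewrite -(ler_pM2l (exprn_gt0 6 eps_gt0)).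
  suff [-> ->] : eps ^+ 6 * ((mu / eps) ^+ 2 * (q11 / eps ^+ 2 - 1) ^+ 2
                   + (q11 / eps ^+ 2) ^+ 2 * (1 - (mu / eps) ^+ 2))
      = mu ^+ 2 * (q11 - eps ^+ 2) ^+ 2 + q11 ^+ 2 * (eps ^+ 2 - mu ^+ 2) /\
    eps ^+ 6 * ((mu / eps) ^+ 2 * d ^+ 2) = d ^+ 2 * eps ^+ 4 * mu ^+ 2.
    exact: critical_gram_bound.
  by split; field.
- rewrite [X in _ <= X](_ : _ = (1 + d) * T / eps ^+ 2); last first.
    by field; rewrite eps_neq0.
  rewrite ler_pM2r ?invr_gt0 ?exprn_gt0 //.
  by move: q_first_order q_second_order; lra.
Qed.

End CriticalGram.

Section CriticalPointBound.
Variables (R : realType) (n r m : nat) (X Z : 'M[R]_(n, r)) (Xp : 'M[R]_(r, n)).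
Variables (A : {linear 'M[R]_n -> 'rV[R]_m}) (d nu : R).
Hypotheses (Xp_pinv : is_pinv X Xp) (nu_gt0 : 0 < nu).
Hypotheses (d_ge0 : 0 <= d) (d_lt1 : d < 1).
Hypothesis rip : forall E : 'M[R]_n, (\rank E <= r + \rank Z)%N ->
  (1 - d) * frob E ^+ 2 <= sqnorm (A E) / nu /\
  sqnorm (A E) / nu <= (1 + d) * frob E ^+ 2.
Hypotheses (grad0 : grad_zero (fA A Z) X) (hess : hess_psd (fA A Z) X).

Local Notation e := (X *m X^T - Z *m Z^T).
Local Notation Zp := (Zperp X Xp Z).
Local Notation M := (Zp *m Zp^T).

Lemma first_order_error : mxdot (A e) (A e) + mxdot (A e) (A M) = 0.
Proof.
have [D DE] := add_error_Zperp_sym X Z Xp.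
by rewrite -mxdotDr -linearD DE grad_zero_fA.
Qed.

Lemma rip_upper_mxdot (E : 'M[R]_n) : (\rank E <= r + \rank Z)%N ->
  mxdot (A E) (A E) <= nu * (1 + d) * mxdot E E.
Proof.
move=> /rip[_]; rewrite sqnorm_mxdot sqr_frob ler_pdivrMr //.
by rewrite [X in _ <= X]mulrC mulrA.
Qed.

(* Hessian test in the direction [b v]: with [c = X v^T], [X^T b = 0] gives
   [<c, b> = 0], hence [|c b^T + b c^T|^2 = 2 |c|^2 |b|^2]. *)
Lemma column_second_order (b : 'cV[R]_n) (p q : 'cV[R]_r) (v : 'rV[R]_r)
    (lam : R) :
  b = X *m p + Z *m q -> X^T *m b = 0 ->
  v != 0 -> v *m (X^T *m X) = lam *: v ->
  - (nu * (1 + d) * lam * mxdot b b) <= mxdot (A e) (A (b *m b^T)).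
Proof.
move=> bE Xtb v_neq0 v_eig; set c := X *m v^T.
have v_gt0 := mxdot_gt0 v_neq0.
have symE : X *m (b *m v)^T + b *m v *m X^T = c *m b^T + b *m c^T.
  by rewrite /c !trmx_mul !trmxK !mulmxA.
have rk : (\rank (c *m b^T + b *m c^T)%R <= r + \rank Z)%N.
  rewrite -symE; apply: (mxrank_sym_mul_le (U := p *m v) (V := q *m v)).
  by rewrite bE mulmxDl !mulmxA.
have cb0 : mxdot c b = 0.
  rewrite mxdot_trace mxtrace_mulC /c mulmxA -[b^T *m X]trmxK trmx_mul !trmxK.
  by rewrite Xtb trmx0 mul0mx mxtrace0.
have := rip_upper_mxdot rk.
rewrite mxdot_sym_outer cb0 (mxdot_gram_eigen v_eig) expr0n /= mulr0 addr0.
have := hess_psd_fA hess (b *m v).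
have -> : b *m v *m (b *m v)^T = mxdot v v *: (b *m b^T).
  by rewrite trmx_mul !mulmxA -(mulmxA b) mul_row_trmx mul_mx_scalar -scalemxAl.
rewrite symE linearZ mxdotZr => hess_bv outer_le.
have : 0 <= mxdot v v * (nu * (1 + d) * lam * mxdot b b
                        + mxdot (A e) (A (b *m b^T))) by lra.
by rewrite pmulr_rge0 //; lra.
Qed.

Lemma eigen_second_order (v : 'rV[R]_r) (lam : R) :
  v != 0 -> v *m (X^T *m X) = lam *: v ->
  - (nu * (1 + d) * lam * mxdot Zp Zp) <= mxdot (A e) (A M).
Proof.
move=> v_neq0 v_eig.
rewrite -(sum_col_mul_trmx Zp) linear_sum mxdot_sumr -mxdot_col_sum mulr_sumr.
rewrite -sumrN; apply: ler_sum => k _.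
apply: (column_second_order (p := - (Xp *m Z *m delta_mx k 0))
  (q := delta_mx k 0) (v := v)) => //.
- by rewrite colE ZperpE mulmxBl mulmxN -!mulmxA addrC.
- by rewrite colE mulmxA trmx_mul_Zperp // mul0mx.
Qed.

Lemma Zperp_second_order :
  - (nu * (1 + d) * sigma_min_sq X * mxdot Zp Zp) <= mxdot (A e) (A M).
Proof.
have [Zp0|Zp_neq0] := eqVneq Zp 0.
  by rewrite Zp0 mul0mx linear0 !mxdot0r mulr0 oppr0.
have r_gt0 := mx_neq0_cols_gt0 Zp_neq0.
have k_gt0 : 0 < nu * (1 + d) * mxdot Zp Zp.
  by rewrite !mulr_gt0 ?mxdot_gt0 //; move: d_ge0; lra.
have : - mxdot (A e) (A M) / (nu * (1 + d) * mxdot Zp Zp) <= sigma_min_sq X.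
  apply: le_sigma_min_sq => // a /eigenvalueP[v v_eig v_neq0].
  rewrite ler_pdivrMr // mulrA.
  by have := eigen_second_order v_neq0 v_eig; lra.
by rewrite ler_pdivrMr // -mulrA [_ * (_ * _)]mulrC -!mulrA; lra.
Qed.

Lemma Zperp_neq0 : e != 0 -> Zp != 0.
Proof.
move=> e_neq0; apply/eqP => Zp0.
have := first_order_error; rewrite Zp0 mul0mx linear0 mxdot0r addr0 => Ae0.
have := rip (mxrank_error_Zperp_le X Z Xp 1 0).
rewrite scale1r scale0r addr0 sqnorm_mxdot Ae0 mul0r sqr_frob => -[lo _].
have : 0 < (1 - d) * mxdot e e by rewrite mulr_gt0 ?mxdot_gt0 // subr_gt0.
lra.
Qed.

Lemma delta_lb_le : e != 0 -> delta_lb X Xp Z <= d.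
Proof.
move=> e_neq0; have Zp_neq0 := Zperp_neq0 e_neq0.
have M_neq0 : M != 0.
  apply: contraNneq (lt0r_neq0 (mxdot_gt0 Zp_neq0)) => M0.
  by rewrite mxdot_trace M0 mxtrace0.
have eM := mxdot_error_Zperp Z Xp_pinv.
set eps := frob e; set mu := frob M.
have eps_gt0 : 0 < eps := frob_gt0 e_neq0.
have mu_gt0 : 0 < mu := frob_gt0 M_neq0.
have mu_le_eps : mu <= eps.
  have : mu ^+ 2 <= eps ^+ 2.
    rewrite !sqr_frob; have := mxdot_ge0 (e + M).
    by rewrite mxdotDl (mxdotDr e e M) (mxdotDr M e M) (mxdotC M e) eM; lra.
  by rewrite ler_pXn2r // nnegrE ltW.
have -> : delta_lb X Xp Z
    = gamma_fn (mu / eps) (sigma_min_sq X * mxdot Zp Zp / (eps * mu)).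
  rewrite /delta_lb /alpha_of /beta_of /= (negbTE Zp_neq0) -/eps -/mu.
  by congr gamma_fn; rewrite -mxdot_trace; field; rewrite !gt_eqF.
apply: (gamma_fn_le_of_gram (q11 := mxdot (A e) (A e) / nu)
  (q12 := mxdot (A e) (A M) / nu) (q22 := mxdot (A M) (A M) / nu)) => //.
- by rewrite -mulrDl first_order_error mul0r.
- move=> x y; have [lo up] := rip (mxrank_error_Zperp_le X Z Xp x y).
  have eps2 : eps ^+ 2 = mxdot e e by rewrite sqr_frob.
  have mu2 : mu ^+ 2 = mxdot M M by rewrite sqr_frob.
  move: lo up; rewrite sqr_frob mxdot_expand2 eM sqnorm_mxdot linearD 2!linearZ.
  by rewrite mxdot_expand2 -eps2 -mu2 => lo up; split; lra.
- have r_gt0 := mx_neq0_cols_gt0 Zp_neq0.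
  by rewrite mulr_ge0 ?mxdot_ge0 ?sigma_min_sq_ge0.
- rewrite ler_pdivlMr // mulNr.
  by have := Zperp_second_order; rewrite -!mulrA [nu * _]mulrC -!mulrA.
Qed.

End CriticalPointBound.

Theorem theorem9 (R : realType) (n r : nat) (X Z : 'M[R]_(n, r))
  (Xp : 'M[R]_(r, n)) :
  is_pinv X Xp ->
  X *m X^T != Z *m Z^T ->
  ((delta_lb X Xp Z)%:E <= delta_XZ X Z)%E.
Proof.
move=> Xp_pinv XX_neq.
apply: le_ereal_inf_tmp => _ [d [m [A [_ [[/andP[d_ge0 d_lt1] [nu [nu_gt0 rip]]]
  [grad0 hess]]]]] <-].
rewrite lee_fin; apply: (delta_lb_le Xp_pinv nu_gt0 d_ge0 d_lt1 rip grad0 hess).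
by rewrite subr_eq0.
Qed.
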